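(* Let $\Omega$ be a compact Hausdorff space such that $C(\Omega)$ admits an equivalent URED norm. Let $E\subset\Omega$ be closed and $J=\{f\in C(\Omega): f|_E=0\}$, with quotient map $\pi:C(\Omega)\to C(\Omega)/J$. Suppose that for every Banach lattice $X$ and every bounded linear lattice homomorphism $T:X\to C(\Omega)/J$ there is a linear lattice homomorphism $T':X\to C(\Omega)$ with $\pi\circ T'=T$ and $\|T'\|=\|T\|$. Then $C(\Omega)/J$ admits an equivalent URED norm.
   Context: $C(\Omega)$ is the Banach lattice of real-valued continuous functions on $\Omega$ with the supremum norm and pointwise order; $C(\Omega)/J$ is identified (isometrically and as a Banach lattice) with $C(E)$ via $\pi(f)\mapsto f|_E$. A norm on a Banach space $Y$ is uniformly rotund in every direction (URED) if whenever $(x_n),(y_n)$ are sequences of unit vectors with $\lim_n\|\tfrac{x_n+y_n}{2}\|=1$ and there exist $z\in Y$ and scalars $r_n$ with $x_n-y_n=r_nz$ for all $n$, then $\lim_n\|x_n-y_n\|=0$. *)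

From HB Require Import structures.
From mathcomp Require Import all_boot all_order all_algebra.
From mathcomp Require Import all_classical all_reals all_analysis.
Set Implicit Arguments. Unset Strict Implicit. Unset Printing Implicit Defensive.
Import Order.TTheory GRing.Theory Num.Theory.
Import numFieldNormedType.Exports.
Local Open Scope classical_set_scope.
Local Open Scope ring_scope.

(* Convention: for a compact Hausdorff space Om and a set A of Om,
   C_A denotes the space of "restrictions to A of continuous functions on Om",
   represented by continuous functions f : Om -> R, two of them being identified
   when they agree on A, with norm  supn A f = sup_{a in A} |f a|.
   For A = setT this is C(Om) with the sup norm; for A = E closed this is
   C(Om)/J identified (as in the paper's context) with C(E) via pi(f) |-> f|_E. *)

Section Defs.
Context {R : realType} {Om : topologicalType}.

Definition supn (A : set Om) (f : Om -> R) : R := sup [set `|f a| | a in A].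

Definition equiv_norm_on (A : set Om) (N : (Om -> R) -> R) : Prop :=
  (forall f g : Om -> R, continuous f -> continuous g ->
     (forall a, A a -> f a = g a) -> N f = N g) /\
  (forall f g : Om -> R, continuous f -> continuous g ->
     N (fun t => f t + g t) <= N f + N g) /\
  (forall (c : R) (f : Om -> R), continuous f ->
     N (fun t => c * f t) = `|c| * N f) /\
  exists c1 c2 : R, 0 < c1 /\ 0 < c2 /\
    forall f : Om -> R, continuous f ->
      c1 * supn A f <= N f /\ N f <= c2 * supn A f.

Definition URED_on (A : set Om) (N : (Om -> R) -> R) : Prop :=
  forall (x y : nat -> Om -> R) (z : Om -> R) (r : nat -> R),
    (forall n, continuous (x n)) -> (forall n, continuous (y n)) -> continuous z ->
    (forall n, N (x n) = 1) -> (forall n, N (y n) = 1) ->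
    (fun n => N (fun t => (x n t + y n t) / 2)) @ \oo --> (1 : R) ->
    (forall n a, A a -> x n a - y n a = r n * z a) ->
    (fun n => N (fun t => x n t - y n t)) @ \oo --> (0 : R).

Definition admits_equiv_URED (A : set Om) : Prop :=
  exists N : (Om -> R) -> R, equiv_norm_on A N /\ URED_on A N.

End Defs.

Definition banach_lattice {R : realType} (X : completeNormedModType R)
    (le : X -> X -> Prop) (jn : X -> X -> X) : Prop :=
  (forall x, le x x) /\
  (forall x y, le x y -> le y x -> x = y) /\
  (forall x y z, le x y -> le y z -> le x z) /\
  (forall x y z, le x y -> le (x + z) (y + z)) /\
  (forall (a : R) x y, 0 <= a -> le x y -> le (a *: x) (a *: y)) /\
  (forall x y, le x (jn x y) /\ le y (jn x y) /\
     forall z, le x z -> le y z -> le (jn x y) z) /\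
  (forall x y, le (jn x (- x)) (jn y (- y)) -> `|x| <= `|y|).

Definition lattice_hom_on {R : realType} {Om : topologicalType}
    (X : completeNormedModType R) (jn : X -> X -> X)
    (A : set Om) (T : X -> Om -> R) : Prop :=
  (forall x, continuous (T x)) /\
  (forall (c : R) (x y : X) a, A a -> T (c *: x + y) a = c * T x a + T y a) /\
  (forall (x y : X) a, A a -> T (jn x y) a = Num.max (T x a) (T y a)).

Definition opnorm_is {R : realType} {Om : topologicalType}
    (X : completeNormedModType R) (A : set Om) (T : X -> Om -> R) (c : R) : Prop :=
  0 <= c /\
  (forall x, supn A (T x) <= c * `|x|) /\
  (forall d : R, (forall x, supn A (T x) <= d * `|x|) -> c <= d).

From HB Require Import structures.
From mathcomp Require Import all_boot all_order all_algebra.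
From mathcomp Require Import all_classical all_reals all_analysis.
From mathcomp Require Import lra.
Import Order.TTheory GRing.Theory Num.Theory.
Import numFieldNormedType.Exports.
Local Open Scope classical_set_scope.
Local Open Scope ring_scope.

(* 1. An equivalent URED norm N on C_B pulls back along any linear map
      Phi : C_A -> C_B with k1 |f|_A <= |Phi f|_B <= k2 |f|_A: the norm
      f |-> N (Phi f) is an equivalent URED norm on C_A.
   2. C_E is itself a Banach lattice and the canonical lift map
      lift : C_E -> C(Om) is an isometric lattice homomorphism onto C_E.
      Completeness is the only non-formal point: a fast Cauchy sequence of
      C_E lifts (by clipping increments) to a uniformly Cauchy sequence of
      continuous functions on Om, whose limit gives the limit in C_E.
   3. The lifting hypothesis, applied to lift, yields a linear lattice
      homomorphism T' : C_E -> C(Om) of norm 1 extending it; since T' x = x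
      on E, T' is an isometric embedding of C_E into C(Om), so step 1 with
      Phi f := T' (class of f) transfers the URED norm of C(Om) to C_E.
   Compactness of Om is only used to make sup norms of continuous functions
   finite. *)

Section PointwiseContinuity.
Context {R : realType} {T : topologicalType}.
Implicit Types f g : T -> R.

Lemma cont_add {f g} : continuous f -> continuous g -> continuous (fun t => f t + g t).
Proof. by move=> cf cg t; apply: cvgD; [exact: cf | exact: cg]. Qed.

Lemma cont_scale (c : R) {f} : continuous f -> continuous (fun t => c * f t).
Proof. by move=> cf t; apply: cvgM; [exact: cvg_cst | exact: cf]. Qed.

Lemma cont_opp {f} : continuous f -> continuous (fun t => - f t).
Proof. by move=> cf t; apply: cvgN; exact: cf. Qed.

Lemma cont_max {f g} : continuous f -> continuous g ->
  continuous (fun t => Num.max (f t) (g t)).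
Proof. by move=> cf cg t; apply: (@continuous_max R T f g t); [exact: cf | exact: cg]. Qed.

Lemma cont_min {f g} : continuous f -> continuous g ->
  continuous (fun t => Num.min (f t) (g t)).
Proof. by move=> cf cg t; apply: (@continuous_min R T f g t); [exact: cf | exact: cg]. Qed.

End PointwiseContinuity.

Section SupNorm.
Context {R : realType} {Om : topologicalType}.
Implicit Types (A B : set Om) (f g : Om -> R).

Lemma supn_le A f M : 0 <= M -> (forall a, A a -> `|f a| <= M) -> supn A f <= M.
Proof.
move=> M_ge0 fM; have [->|/set0P[a Aa]] := eqVneq A set0.
  by rewrite /supn image_set0 sup0.
apply: ge_sup; first by exists `|f a|, a.
by move=> _ [b Ab <-]; exact: fM.
Qed.

Lemma eq_supn {A f g} : (forall a, A a -> f a = g a) -> supn A f = supn A g.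
Proof.
move=> fg; rewrite /supn; congr sup.
by apply/seteqP; split => _ [a Aa <-]; exists a => //; rewrite fg.
Qed.

Hypothesis Om_compact : compact [set: Om].

Lemma continuous_bounded f : continuous f -> exists M, forall t, `|f t| <= M.
Proof.
move=> cf; have : compact (f @` setT).
  by apply: continuous_compact => //; exact: continuous_subspaceT.
move=> /(@compact_bounded R R^o) [M [_ HM]].
by exists (M + 1) => t; apply: (HM (M + 1)); [rewrite ltrDl | exists t].
Qed.

Lemma supn_ub A f a : continuous f -> A a -> `|f a| <= supn A f.
Proof.
move=> /continuous_bounded [M fM] Aa; apply: sup_upper_bound; last by exists a.
by split; [exists `|f a|, a | exists M => _ [b _ <-]].
Qed.

Lemma supn_ge0 A f : continuous f -> 0 <= supn A f.
Proof.
move=> cf; have [->|/set0P[a Aa]] := eqVneq A set0.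
  by rewrite /supn image_set0 sup0.
exact: le_trans (normr_ge0 (f a)) (supn_ub _ _ _ cf Aa).
Qed.

Lemma le_supn A B f : continuous f -> A `<=` B -> supn A f <= supn B f.
Proof.
move=> cf AB; apply: supn_le; first exact: supn_ge0.
by move=> a Aa; apply: supn_ub => //; exact: AB.
Qed.

End SupNorm.

Section EquivalentNormPullback.
Context {R : realType} {Om : topologicalType}.
Variables (A B : set Om) (Phi : (Om -> R) -> Om -> R) (k1 k2 : R).
Hypotheses (k1_gt0 : 0 < k1) (k2_gt0 : 0 < k2).

Hypothesis Phi_cont : forall f : Om -> R, continuous f -> continuous (Phi f).
Hypothesis Phi_agree : forall f g : Om -> R, continuous f -> continuous g ->
  (forall a, A a -> f a = g a) -> Phi f = Phi g.
Hypothesis Phi_add : forall f g : Om -> R, continuous f -> continuous g ->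
  Phi (fun t => f t + g t) = (fun t => Phi f t + Phi g t).
Hypothesis Phi_scale : forall (c : R) (f : Om -> R), continuous f ->
  Phi (fun t => c * f t) = (fun t => c * Phi f t).
Hypothesis Phi_lower : forall f : Om -> R, continuous f -> k1 * supn A f <= supn B (Phi f).
Hypothesis Phi_upper : forall f : Om -> R, continuous f -> supn B (Phi f) <= k2 * supn A f.

Lemma Phi_sub (f g : Om -> R) : continuous f -> continuous g ->
  Phi (fun t => f t - g t) = (fun t => Phi f t - Phi g t).
Proof.
move=> cf cg; have -> : (fun t => f t - g t) = (fun t => f t + (-1) * g t).
  by apply/funext => t; rewrite mulN1r.
rewrite Phi_add ?Phi_scale //; last exact: cont_scale.
by apply/funext => t; rewrite mulN1r.
Qed.

Lemma Phi_mid (f g : Om -> R) : continuous f -> continuous g ->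
  Phi (fun t => (f t + g t) / 2) = (fun t => (Phi f t + Phi g t) / 2).
Proof.
move=> cf cg; have -> : (fun t => (f t + g t) / 2) = (fun t => 2^-1 * (f t + g t)).
  by apply/funext => t; rewrite mulrC.
rewrite Phi_scale ?Phi_add //; last exact: cont_add.
by apply/funext => t; rewrite mulrC.
Qed.

Lemma pullback_equiv_norm (N : (Om -> R) -> R) :
  equiv_norm_on B N -> equiv_norm_on A (fun f => N (Phi f)).
Proof.
move=> [_ [N_add [N_scale [c1 [c2 [c1_gt0 [c2_gt0 N_bounds]]]]]]].
split; first by move=> f g cf cg fg; rewrite (Phi_agree _ _ cf cg fg).
split; first by move=> f g cf cg; rewrite Phi_add //; apply: N_add; exact: Phi_cont.
split; first by move=> c f cf; rewrite Phi_scale //; apply: N_scale; exact: Phi_cont.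
exists (c1 * k1), (c2 * k2); do 2 (split; first exact: mulr_gt0).
move=> f cf; have [N_lo N_hi] := N_bounds _ (Phi_cont _ cf); split.
- by rewrite -mulrA; apply: le_trans N_lo; rewrite ler_pM2l // Phi_lower.
- by apply: le_trans N_hi _; rewrite -mulrA ler_pM2l // Phi_upper.
Qed.

(* The segment [x_n, y_n] is sent by Phi to [Phi x_n, Phi y_n], and the
   common direction z of x_n - y_n on A to the direction Phi z. *)
Lemma pullback_URED (N : (Om -> R) -> R) :
  URED_on B N -> URED_on A (fun f => N (Phi f)).
Proof.
move=> N_URED x y z r cx cy cz x_unit y_unit mid_cvg dir.
have cxy n : continuous (fun t => x n t - y n t) by apply: cont_add => //; exact: cont_opp.
have -> : (fun n => N (Phi (fun t => x n t - y n t))) =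
          (fun n => N (fun t => Phi (x n) t - Phi (y n) t)).
  by apply/funext => n; rewrite Phi_sub.
apply: (N_URED _ _ (Phi z) r) => //.
- by move=> n; exact: Phi_cont.
- by move=> n; exact: Phi_cont.
- exact: Phi_cont.
- have <- : (fun n => N (Phi (fun t => (x n t + y n t) / 2))) =
            (fun n => N (fun t => (Phi (x n) t + Phi (y n) t) / 2)).
    by apply/funext => n; rewrite Phi_mid.
  exact: mid_cvg.
- move=> n a _.
  have := congr1 (fun h => h a) (Phi_agree _ _ (cxy n) (cont_scale (r n) cz) (dir n)).
  by rewrite Phi_sub // Phi_scale.
Qed.

Lemma admits_equiv_URED_pullback :
  @admits_equiv_URED R Om B -> @admits_equiv_URED R Om A.
Proof.
move=> [N [N_equiv N_URED]]; exists (fun f => N (Phi f)).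
by split; [exact: pullback_equiv_norm | exact: pullback_URED].
Qed.

End EquivalentNormPullback.

(* C_set0 is the zero space; the zero norm is vacuously URED on it. *)
Lemma admits_equiv_URED_set0 {R : realType} {Om : topologicalType} :
  @admits_equiv_URED R Om set0.
Proof.
exists (fun _ => 0); split.
  split => //; split; first by move=> *; rewrite addr0.
  split; first by move=> *; rewrite mulr0.
  exists 1, 1; do 2 split => //; move=> f cf.
  by rewrite /supn image_set0 sup0 mulr0.
by move=> x y z r _ _ _ x_unit; have /eqP := x_unit 0%N; rewrite eq_sym oner_eq0.
Qed.

Section LatticeHomLinear.
Context {R : realType} {Om : topologicalType} {X : completeNormedModType R}.
Context {jn : X -> X -> X} {A : set Om} {T : X -> Om -> R}.
Hypothesis T_hom : lattice_hom_on jn A T.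

Lemma hom0 a : A a -> T 0 a = 0.
Proof.
move=> Aa; have [_ [T_lin _]] := T_hom.
by have := T_lin 1 0 0 a Aa; rewrite scaler0 addr0 mul1r; lra.
Qed.

Lemma homD x y a : A a -> T (x + y) a = T x a + T y a.
Proof.
move=> Aa; have [_ [T_lin _]] := T_hom.
by have := T_lin 1 x y a Aa; rewrite scale1r mul1r.
Qed.

Lemma homZ c x a : A a -> T (c *: x) a = c * T x a.
Proof.
move=> Aa; have [_ [T_lin _]] := T_hom.
by have := T_lin c x 0 a Aa; rewrite !addr0 hom0 // addr0.
Qed.

Lemma homB x y a : A a -> T (x - y) a = T x a - T y a.
Proof. by move=> Aa; rewrite homD // -scaleN1r homZ // mulN1r. Qed.

End LatticeHomLinear.

Section IsometricLift.
Context {R : realType} {Om : topologicalType} {X : completeNormedModType R}.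
Hypothesis Om_compact : compact [set: Om].
Context {jn : X -> X -> X} {E : set Om} {T : X -> Om -> R}.

Hypothesis T_hom : lattice_hom_on jn E T.
Hypothesis T_iso : forall x, `|x| = supn E (T x).
Hypothesis T_onto : forall f : Om -> R, continuous f ->
  exists x, forall a, E a -> T x a = f a.

Lemma T_cont x : continuous (T x). Proof. by case: T_hom. Qed.

Lemma iso_opnorm {a0} : E a0 -> opnorm_is E T 1.
Proof.
move=> Ea0; split => //; split; first by move=> x; rewrite mul1r T_iso.
move=> d dT; have [u u1] := T_onto _ (@cst_continuous Om R 1).
have u_norm : `|u| = 1.
  rewrite T_iso (eq_supn u1); apply/le_anti/andP; split.
    by apply: supn_le => // a _; rewrite normr1.
  have := supn_ub Om_compact E (fun _ => 1) a0 (@cst_continuous Om R 1) Ea0.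
  by rewrite normr1.
by have := dT u; rewrite u_norm mulr1 -T_iso u_norm.
Qed.

Definition preim (f : Om -> R) : X := xget 0 [set x | forall a, E a -> T x a = f a].

Lemma preimP f : continuous f -> forall a, E a -> T (preim f) a = f a.
Proof. by move=> cf; exact: xgetPex (T_onto _ cf). Qed.

(* Being isometric, T is injective modulo E. *)
Lemma preim_eq f x : continuous f -> (forall a, E a -> T x a = f a) -> preim f = x.
Proof.
move=> cf xf; apply/eqP; rewrite -subr_eq0 -normr_eq0 T_iso.
rewrite eq_le (supn_ge0 Om_compact _ _ (T_cont _)) andbT.
by apply: supn_le => // a Ea; rewrite (homB T_hom) // preimP // xf // subrr normr0.
Qed.

Context {T' : X -> Om -> R}.
Hypothesis T'_hom : lattice_hom_on jn setT T'.
Hypothesis T'_ext : forall x a, E a -> T' x a = T x a.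
Hypothesis T'_norm : opnorm_is setT T' 1.

(* f |-> T' (preim f) embeds C_E isometrically into C(Om): URED descends. *)
Lemma URED_descends : @admits_equiv_URED R Om setT -> @admits_equiv_URED R Om E.
Proof.
have T'_cont x : continuous (T' x) by case: T'_hom.
have T'D x y : T' (x + y) = (fun t => T' x t + T' y t).
  by apply/funext => t; exact: (homD T'_hom).
have T'Z c x : T' (c *: x) = (fun t => c * T' x t).
  by apply/funext => t; exact: (homZ T'_hom).
have [_ [T'_le _]] := T'_norm.
apply: (@admits_equiv_URED_pullback R Om E setT (fun f => T' (preim f)) 1 1 ltr01 ltr01).
- by move=> f _; exact: T'_cont.
- move=> f g cf cg fg; congr T'; apply: preim_eq => // a Ea.
  by rewrite preimP // fg.
- move=> f g cf cg; rewrite -T'D; congr T'; apply: preim_eq; first exact: cont_add.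
  by move=> a Ea; rewrite (homD T_hom) // !preimP.
- move=> c f cf; rewrite -T'Z; congr T'; apply: preim_eq; first exact: cont_scale.
  by move=> a Ea; rewrite (homZ T_hom) // !preimP.
- move=> f cf; rewrite mul1r -(eq_supn (preimP _ cf)).
  rewrite (eq_supn (fun a Ea => esym (T'_ext (preim f) a Ea))).
  by apply: le_supn => //; exact: T'_cont.
- by move=> f cf; rewrite mul1r -(eq_supn (preimP _ cf)) -T_iso -[`|_|]mul1r.
Qed.

End IsometricLift.

Section DyadicLimit.
Context {R : realType}.

Definition dyadic (n : nat) : R := (2 ^+ n)^-1.

Lemma dyadic_gt0 n : 0 < dyadic n.
Proof. by rewrite /dyadic invr_gt0 exprn_gt0. Qed.

Lemma dyadicS n : dyadic n.+1 = dyadic n / 2.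
Proof. by rewrite /dyadic exprS invfM mulrC. Qed.

Lemma dyadic_small {d : R} : 0 < d -> exists n, dyadic n < d.
Proof.
move=> d_gt0; exists (Num.Def.trunc d^-1).+1; rewrite /dyadic -(invrK d).
rewrite ltf_pV2 ?posrE ?exprn_gt0 ?invr_gt0 //.
apply: lt_trans (truncnS_gt _) _.
by rewrite -natrX ltr_nat invrK ltn_expl.
Qed.

(* The limit is the supremum of the increasing sequence g n - 2^(1-n). *)
Lemma dyadic_uniform_limit {T : topologicalType} {g : nat -> T -> R} :
  (forall n, continuous (g n)) -> (forall n t, `|g n.+1 t - g n t| <= dyadic n) ->
  exists2 l : T -> R, continuous l & forall n t, `|l t - g n t| <= 2 * dyadic n.
Proof.
move=> g_cont g_step.
pose lo t n := g n t - 2 * dyadic n.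
pose hi t n := g n t + 2 * dyadic n.
have lo_incr t : {homo lo t : n m / (n <= m)%N >-> n <= m}.
  apply/nondecreasing_seqP => n; have := g_step n t.
  by rewrite /lo dyadicS ler_norml; lra.
have hi_decr t : {homo hi t : n m / (n <= m)%N >-> m <= n}.
  apply/nonincreasing_seqP => n; have := g_step n t.
  by rewrite /hi dyadicS ler_norml; lra.
have lo_hi t n m : lo t n <= hi t m.
  have lo_hi_diag k : lo t k <= hi t k by rewrite /lo /hi; have := dyadic_gt0 k; lra.
  apply: le_trans (lo_incr t _ _ (leq_maxl n m)) _.
  exact: le_trans (lo_hi_diag _) (hi_decr t _ _ (leq_maxr n m)).
pose l t := sup (range (lo t)).
have l_between t n : lo t n <= l t <= hi t n.
  have lo_bnd : has_sup (range (lo t)).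
    by split; [exists (lo t 0%N), 0%N | exists (hi t 0%N) => _ [m _ <-]; exact: lo_hi].
  apply/andP; split; first by apply: sup_upper_bound => //; exists n.
  by apply: ge_sup; [exists (lo t 0%N), 0%N | move=> _ [m _ <-]; exact: lo_hi].
have l_near n t : `|l t - g n t| <= 2 * dyadic n.
  by move: (l_between t n); rewrite /lo /hi ler_norml => /andP[? ?]; apply/andP; split; lra.
(* |l t - l s| <= |l t - g n t| + |g n t - g n s| + |g n s - l s|, with n large. *)
exists l => // t; apply/cvgrPdist_lt => eps eps_gt0.
have [n n_small] := dyadic_small (divr_gt0 eps_gt0 (ltr0n _ 8)).
have /cvgrPdist_lt /(_ _ (divr_gt0 eps_gt0 (ltr0n _ 4))) := g_cont n t.
apply: filterS => s gs; have := l_near n t; have := l_near n s; move: gs.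
by rewrite !ler_norml !ltr_norml => /andP[? ?] /andP[? ?] /andP[? ?]; apply/andP; split; lra.
Qed.

End DyadicLimit.

Section QuotientLattice.
Context {R : realType} {Om : topologicalType}.
Hypothesis Om_compact : compact [set: Om].
Variable E : set Om.

Definition agree (f g : Om -> R) := forall a, E a -> f a = g a.

Definition lifts (f : Om -> R) := [set g : Om -> R | continuous g /\ agree f g].

Definition canon (f : Om -> R) : Om -> R := xget f (lifts f).

Lemma lifts_eq {f g} : agree f g -> lifts f = lifts g.
Proof.
move=> fg; apply/seteqP; split => h /= [ch fh]; split => // a Ea.
  by rewrite -fg // fh.
by rewrite fg // fh.
Qed.

Lemma canon_agree f : agree f (canon f).
Proof. by rewrite /canon; case: xgetP => [g -> []|]. Qed.

Lemma canon_cont {f} : continuous f -> continuous (canon f).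
Proof.
move=> cf; rewrite /canon; case: xgetP => [g -> []//|no_lift].
by case: (no_lift f).
Qed.

Lemma canon_eq f g : continuous f -> agree f g -> canon f = canon g.
Proof.
move=> cf fg; rewrite /canon /xget (lifts_eq fg); case: pselect => // no_lift.
by case: no_lift; exists f; apply/asboolP; split => // a Ea; rewrite fg.
Qed.

Lemma canon_idem {f} : continuous f -> canon (canon f) = canon f.
Proof. by move=> cf; apply/esym/canon_eq => //; exact: canon_agree. Qed.

(* C_E, realised by canonical representatives. *)
Record CE := MkCE {
  lift : Om -> R;
  lift_cont : continuous lift;
  lift_canon : canon lift = lift }.

Definition inCE {f : Om -> R} (cf : continuous f) : CE :=
  @MkCE (canon f) (canon_cont cf) (canon_idem cf).

Lemma CE_eq (x y : CE) : agree (lift x) (lift y) -> x = y.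
Proof.
case: x y => f cf f_canon [g cg g_canon] /= fg.
have fgE : f = g by rewrite -f_canon -g_canon; exact: canon_eq.
by subst g; congr MkCE; exact: Prop_irrelevance.
Qed.

Lemma inCE_agree f (cf : continuous f) : agree (lift (inCE cf)) f.
Proof. by move=> a Ea /=; rewrite -canon_agree. Qed.

HB.instance Definition _ := gen_eqMixin CE.
HB.instance Definition _ := gen_choiceMixin CE.

Definition CE_zero : CE := inCE (@cst_continuous Om R 0).
Definition CE_opp (x : CE) : CE := inCE (cont_opp (lift_cont x)).
Definition CE_add (x y : CE) : CE := inCE (cont_add (lift_cont x) (lift_cont y)).
Definition CE_scale (c : R) (x : CE) : CE := inCE (cont_scale c (lift_cont x)).

Lemma CE_addA : associative CE_add.
Proof. by move=> x y z; apply: CE_eq => a Ea; rewrite !inCE_agree // addrA. Qed.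
Lemma CE_addC : commutative CE_add.
Proof. by move=> x y; apply: CE_eq => a Ea; rewrite !inCE_agree // addrC. Qed.
Lemma CE_add0 : left_id CE_zero CE_add.
Proof. by move=> x; apply: CE_eq => a Ea; rewrite !inCE_agree // add0r. Qed.
Lemma CE_addN : left_inverse CE_zero CE_opp CE_add.
Proof. by move=> x; apply: CE_eq => a Ea; rewrite !inCE_agree // addNr. Qed.

HB.instance Definition _ := GRing.isZmodule.Build CE CE_addA CE_addC CE_add0 CE_addN.

Lemma CE_scaleA a b x : CE_scale a (CE_scale b x) = CE_scale (a * b) x.
Proof. by apply: CE_eq => t Et; rewrite !inCE_agree // mulrA. Qed.
Lemma CE_scale1 : left_id 1 CE_scale.
Proof. by move=> x; apply: CE_eq => t Et; rewrite !inCE_agree // mul1r. Qed.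
Lemma CE_scaleDr : right_distributive CE_scale +%R.
Proof. by move=> c x y; apply: CE_eq => t Et; rewrite !inCE_agree // mulrDr. Qed.
Lemma CE_scaleDl x : {morph CE_scale^~ x : a b / a + b}.
Proof. by move=> c d; apply: CE_eq => t Et; rewrite !inCE_agree // mulrDl. Qed.

HB.instance Definition _ :=
  GRing.Zmodule_isLmodule.Build R CE CE_scaleA CE_scale1 CE_scaleDr CE_scaleDl.

Lemma liftD (x y : CE) a : E a -> lift (x + y) a = lift x a + lift y a.
Proof. exact: inCE_agree. Qed.
Lemma liftZ c (x : CE) a : E a -> lift (c *: x) a = c * lift x a.
Proof. exact: inCE_agree. Qed.
Lemma liftB (x y : CE) a : E a -> lift (x - y) a = lift x a - lift y a.
Proof. by move=> Ea; rewrite liftD //; congr (_ + _); exact: inCE_agree. Qed.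

Definition CE_norm (x : CE) : R := supn E (lift x).

Lemma lift_ub (x : CE) a : E a -> `|lift x a| <= CE_norm x.
Proof. exact/(supn_ub Om_compact)/lift_cont. Qed.
Lemma CE_norm_ge0 (x : CE) : 0 <= CE_norm x.
Proof. exact/(supn_ge0 Om_compact)/lift_cont. Qed.

Lemma CE_normD x y : CE_norm (x + y) <= CE_norm x + CE_norm y.
Proof.
apply: supn_le => [|a Ea]; first by rewrite addr_ge0 // CE_norm_ge0.
by rewrite liftD //; apply: le_trans (ler_normD _ _) _; rewrite lerD // lift_ub.
Qed.

Lemma CE_normZ (c : R) x : CE_norm (c *: x) = `|c| * CE_norm x.
Proof.
apply/le_anti/andP; split.
  apply: supn_le => [|a Ea]; first by rewrite mulr_ge0 // CE_norm_ge0.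
  by rewrite liftZ // normrM ler_wpM2l // lift_ub.
have [->|c_neq0] := eqVneq c 0; first by rewrite normr0 mul0r CE_norm_ge0.
have c_gt0 : 0 < `|c| by rewrite normr_gt0.
rewrite -ler_pdivlMl //; apply: supn_le => [|a Ea].
  by rewrite mulr_ge0 ?invr_ge0 ?CE_norm_ge0 // ltW.
by rewrite ler_pdivlMl // -normrM -liftZ // lift_ub.
Qed.

Lemma CE_norm0 x : CE_norm x = 0 -> x = 0.
Proof.
move=> x0; apply: CE_eq => a Ea; rewrite [RHS]inCE_agree //.
by apply/normr0_eq0/le_anti; rewrite normr_ge0 andbT -x0 lift_ub.
Qed.

HB.instance Definition _ := Lmodule_isNormed.Build R CE CE_normD CE_normZ CE_norm0.

Lemma CE_normE (x : CE) : `|x| = supn E (lift x). Proof. by []. Qed.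

Lemma small_lift (u : CE) (d : R) : `|u| <= d ->
  exists h : Om -> R, [/\ continuous h, forall t, `|h t| <= d & agree (lift u) h].
Proof.
move=> u_le; have d_ge0 : 0 <= d := le_trans (CE_norm_ge0 u) u_le.
exists (fun t => Num.max (- d) (Num.min d (lift u t))); split.
- apply: cont_max; first exact: cst_continuous.
  by apply: cont_min; [exact: cst_continuous | exact: lift_cont].
- by move=> t; rewrite ler_norml le_max lexx ge_max ge_min lexx /= andbT; lra.
- move=> a Ea; have := le_trans (lift_ub u a Ea) u_le.
  by rewrite ler_norml => /andP[u_lo u_hi]; rewrite min_r // max_r.
Qed.

(* In C_E, a sequence with |x_(n+1) - x_n| <= 2^-n converges at rate 2^(1-n):
   summing clipped lifts of the increments gives a uniformly convergent
   sequence of continuous lifts of the x_n. *)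
Lemma CE_dyadic_limit (xs : nat -> CE) : (forall n, `|xs n.+1 - xs n| <= dyadic n) ->
  exists l : CE, forall n, `|xs n - l| <= 2 * dyadic n.
Proof.
move=> xs_step; have [c c_lift] := choice (fun n => small_lift _ _ (xs_step n)).
pose g := fix g n := if n is m.+1 then (fun t => g m t + c m t) else lift (xs 0%N).
have g_cont n : continuous (g n).
  by elim: n => [|n IHn] /=; [exact: lift_cont | apply: cont_add => //; case: (c_lift n)].
have g_lift n a : E a -> g n a = lift (xs n) a.
  move=> Ea; elim: n => [|n IHn] //=; have [_ _ cE] := c_lift n.
  by rewrite IHn -cE // liftB // addrC subrK.
have g_step n t : `|g n.+1 t - g n t| <= dyadic n.
  by have [_ c_le _] := c_lift n; rewrite /= addrC addKr.
have [l l_cont l_near] := dyadic_uniform_limit g_cont g_step.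
exists (inCE l_cont) => n; rewrite CE_normE.
apply: supn_le => [|a Ea]; first by rewrite mulr_ge0 // ltW // dyadic_gt0.
by rewrite liftB // inCE_agree // -g_lift // distrC; exact: l_near.
Qed.

(* A Cauchy filter on C_E converges: extract a fast Cauchy sequence, whose
   limit is the limit of the filter. *)
Lemma CE_complete (F : set_system CE) : ProperFilter F -> cauchy F -> cvg F.
Proof.
move=> F_proper /cauchyP F_cauchy.
have [xs xs_F] := choice (fun n => F_cauchy _ (dyadic_gt0 n.+1)).
have xs_step n : `|xs n.+1 - xs n| <= dyadic n.
  have [y [y_n y_Sn]] := filter_ex (filterI (xs_F n) (xs_F n.+1)).
  move: y_n y_Sn; rewrite -!ball_normE /= !dyadicS => y_n y_Sn.
  apply: le_trans (ler_distD y _ _) _; rewrite (distrC y).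
  by have := @dyadic_gt0 R n; lra.
have [l xs_l] := CE_dyadic_limit _ xs_step.
apply/cvg_ex; exists l => A /nbhs_ballP [eps /= eps_gt0 eps_A].
have [n n_small] := dyadic_small (divr_gt0 eps_gt0 (ltr0n _ 3)).
apply: filterS (xs_F n) => y; rewrite -ball_normE /= dyadicS => y_n; apply: eps_A.
rewrite -ball_normE /=; apply: le_lt_trans (ler_distD (xs n) _ _) _.
by rewrite (distrC l); have := xs_l n; lra.
Qed.

HB.instance Definition _ := Uniform_isComplete.Build CE CE_complete.

Definition CE_le (x y : CE) : Prop := forall a, E a -> lift x a <= lift y a.
Definition CE_join (x y : CE) : CE := inCE (cont_max (lift_cont x) (lift_cont y)).

Lemma CE_joinE x y a : E a -> lift (CE_join x y) a = Num.max (lift x a) (lift y a).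
Proof. exact: inCE_agree. Qed.

Lemma CE_banach_lattice : banach_lattice CE_le CE_join.
Proof.
split; first by move=> x a Ea.
split; first by move=> x y xy yx; apply: CE_eq => a Ea; apply/le_anti; rewrite xy // yx.
split; first by move=> x y z xy yz a Ea; exact: le_trans (xy a Ea) (yz a Ea).
split; first by move=> x y z xy a Ea; rewrite !liftD // lerD2r xy.
split; first by move=> c x y c_ge0 xy a Ea; rewrite !liftZ // ler_wpM2l // xy.
split.
  move=> x y; split; first by move=> a Ea; rewrite CE_joinE // le_max lexx.
  split; first by move=> a Ea; rewrite CE_joinE // le_max lexx orbT.
  by move=> z xz yz a Ea; rewrite CE_joinE // ge_max xz // yz.
move=> x y abs_xy; rewrite !CE_normE; apply: supn_le => [|a Ea]; first exact: CE_norm_ge0.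
apply: le_trans (lift_ub y a Ea); have := abs_xy a Ea.
by rewrite !CE_joinE // !inCE_agree // !maxrN.
Qed.

Lemma quotient_banach_lattice :
  exists (X : completeNormedModType R) (le : X -> X -> Prop) (jn : X -> X -> X)
         (T : X -> Om -> R),
    [/\ banach_lattice le jn, lattice_hom_on jn E T,
        forall x, `|x| = supn E (T x)
      & forall f, continuous f -> exists x, forall a, E a -> T x a = f a].
Proof.
exists CE, CE_le, CE_join, lift; split => //; first exact: CE_banach_lattice.
- split; first exact: lift_cont.
  by split => [c x y a Ea | x y a Ea]; rewrite ?liftD ?liftZ ?CE_joinE.
- by move=> f cf; exists (inCE cf); exact: inCE_agree.
Qed.

End QuotientLattice.

Theorem theorem11 (R : realType) (Om : topologicalType) (E : set Om) :
  hausdorff_space Om -> compact [set: Om] -> closed E ->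
  @admits_equiv_URED R Om [set: Om] ->
  (forall (X : completeNormedModType R) (le : X -> X -> Prop) (jn : X -> X -> X),
     banach_lattice le jn ->
     forall (T : X -> Om -> R) (c : R),
       lattice_hom_on jn E T -> opnorm_is E T c ->
       exists T' : X -> Om -> R,
         lattice_hom_on jn [set: Om] T' /\
         (forall x a, E a -> T' x a = T x a) /\
         opnorm_is [set: Om] T' c) ->
  @admits_equiv_URED R Om E.
Proof.
move=> _ Om_compact _ URED_Om lifting.
have [->|/set0P[a0 Ea0]] := eqVneq E set0; first exact: admits_equiv_URED_set0.
have [X [le [jn [T [X_lattice T_hom T_iso T_onto]]]]] :=
  @quotient_banach_lattice R Om Om_compact E.
have T_norm := iso_opnorm Om_compact T_iso T_onto Ea0.
have [T' [T'_hom [T'_ext T'_norm]]] := lifting X le jn X_lattice T 1 T_hom T_norm.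
exact: (URED_descends Om_compact T_hom T_iso T_onto T'_hom T'_ext T'_norm URED_Om).
Qed.
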